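(* Suppose a three-link protocol given by maps $s_{AB},s_{AC},s_{BC}$ (and decision functions) solves MEQ-AD$(3,M)$, and let $G(U,V,E)$ be the associated bipartite graph. If $x\neq x'$ and the edges corresponding to $x$ and $x'$ in $G$ are adjacent (share an endpoint), or there is some other edge of $G$ adjacent to both of them, then $s_{BC}(x)\neq s_{BC}(x')$. In other words, $x\mapsto s_{BC}(x)$ is a distance-2 edge coloring of $G$.
   Context: Three nodes $A,B,C$ hold inputs $x_A,x_B,x_C\in\{1,\dots,M\}$. A three-link protocol is given by maps $s_{AB},s_{AC},s_{BC}$ from $\{1,\dots,M\}$ to finite sets: $A$ sends $s_{AB}(x_A)$ to $B$ and $s_{AC}(x_A)$ to $C$, and $B$ sends $s_{BC}(x_B)$ to $C$. Each node outputs a bit: $EQ_A$ is a function of $x_A$, $EQ_B$ a function of $(x_B,s_{AB}(x_A))$, and $EQ_C$ a function of $(x_C,s_{AC}(x_A),s_{BC}(x_B))$. The protocol solves MEQ-AD$(3,M)$ if for all inputs, $EQ_A=EQ_B=EQ_C=0$ holds iff $x_A=x_B=x_C$. The associated bipartite graph $G(U,V,E)$ has vertices $U_i$ for $i$ in the range of $s_{AB}$, $V_j$ for $j$ in the range of $s_{AC}$, and an edge $(U_i,V_j)$ iff $i=s_{AB}(x)$, $j=s_{AC}(x)$ for some $x$; this edge corresponds to $x$ (each edge corresponds to a unique $x$ when the protocol is correct). A distance-2 edge coloring assigns colors to edges so that any two distinct edges that share an endpoint, or are both adjacent to a common third edge, get different colors. *)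

From mathcomp Require Import all_boot.
Set Implicit Arguments. Unset Strict Implicit. Unset Printing Implicit Defensive.

(* Inputs {1..M} are represented by 'I_M (= {0..M-1}).  Message alphabets are
   arbitrary finite types.  Output bits are booleans, with bit 0 = false. *)

Definition solves_MEQ_AD3 (M : nat) (TAB TAC TBC : finType)
  (sAB : 'I_M -> TAB) (sAC : 'I_M -> TAC) (sBC : 'I_M -> TBC)
  (EQA : 'I_M -> bool) (EQB : 'I_M -> TAB -> bool)
  (EQC : 'I_M -> TAC -> TBC -> bool) : Prop :=
  forall xA xB xC : 'I_M,
    (EQA xA = false /\ EQB xB (sAB xA) = false /\
     EQC xC (sAC xA) (sBC xB) = false) <-> (xA = xB /\ xB = xC).

(* Bipartite graph G(U,V,E): U-vertices are values of sAB, V-vertices values of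
   sAC; an edge (U_i, V_j) is a pair (i, j).  The edge corresponding to x: *)
Definition edge_of (M : nat) (TAB TAC : finType)
  (sAB : 'I_M -> TAB) (sAC : 'I_M -> TAC) (x : 'I_M) : TAB * TAC :=
  (sAB x, sAC x).

Definition is_edge (M : nat) (TAB TAC : finType)
  (sAB : 'I_M -> TAB) (sAC : 'I_M -> TAC) (e : TAB * TAC) : Prop :=
  exists x : 'I_M, e = edge_of sAB sAC x.

Definition edges_adjacent (TAB TAC : finType) (e f : TAB * TAC) : Prop :=
  e <> f /\ (e.1 = f.1 \/ e.2 = f.2).

From mathcomp Require Import all_boot.

Set Implicit Arguments.
Unset Strict Implicit.

(* If [sBC x = sBC x'] for some edge [y] sharing its U-endpoint with [x] and
   its V-endpoint with [x'], then on inputs [(y, x, x')] node B sees the same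
   message as on [(x, x, x)] and node C the same messages as on [(x', x', x')],
   so nobody raises an alarm although the inputs differ; hence [y = x = x'].
   Each case of the distance-2 condition yields such a [y]. *)

Section Protocol.

Variables (M : nat) (TAB TAC TBC : finType).
Variables (sAB : 'I_M -> TAB) (sAC : 'I_M -> TAC) (sBC : 'I_M -> TBC).
Variables (EQA : 'I_M -> bool) (EQB : 'I_M -> TAB -> bool).
Variable EQC : 'I_M -> TAC -> TBC -> bool.
Hypothesis solves : solves_MEQ_AD3 sAB sAC sBC EQA EQB EQC.

Lemma no_alarm_on_equal_inputs (a : 'I_M) :
  [/\ EQA a = false, EQB a (sAB a) = false & EQC a (sAC a) (sBC a) = false].
Proof. by have [? [? ?]] := proj2 (solves a a a) (conj erefl erefl). Qed.

Lemma eq_inputs_of_eq_messages {a b c : 'I_M} :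
  sAB a = sAB b -> sAC a = sAC c -> sBC b = sBC c -> a = b /\ b = c.
Proof.
move=> eAB eAC eBC; apply/solves.
have [EAa _ _] := no_alarm_on_equal_inputs a.
have [_ EBb _] := no_alarm_on_equal_inputs b.
have [_ _ ECc] := no_alarm_on_equal_inputs c.
by rewrite eAB eAC eBC.
Qed.

Lemma eq_of_bridging_edge {y x x' : 'I_M} :
  sBC x = sBC x' -> sAB y = sAB x -> sAC y = sAC x' -> y = x.
Proof. by move=> eBC eAB eAC; case: (eq_inputs_of_eq_messages eAB eAC eBC). Qed.

Lemma eq_of_eq_sAB {x x' : 'I_M} : sBC x = sBC x' -> sAB x = sAB x' -> x = x'.
Proof.
by move=> eBC eAB; rewrite (eq_of_bridging_edge eBC (esym eAB) erefl).
Qed.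

Lemma eq_of_eq_sAC {x x' : 'I_M} : sBC x = sBC x' -> sAC x = sAC x' -> x = x'.
Proof. by move=> eBC eAC; case: (eq_inputs_of_eq_messages erefl eAC eBC). Qed.

End Protocol.

Theorem lemma4 (M : nat) (TAB TAC TBC : finType)
  (sAB : 'I_M -> TAB) (sAC : 'I_M -> TAC) (sBC : 'I_M -> TBC)
  (EQA : 'I_M -> bool) (EQB : 'I_M -> TAB -> bool)
  (EQC : 'I_M -> TAC -> TBC -> bool) :
  solves_MEQ_AD3 sAB sAC sBC EQA EQB EQC ->
  forall x x' : 'I_M, x <> x' ->
  (edges_adjacent (edge_of sAB sAC x) (edge_of sAB sAC x') \/
   exists e, is_edge sAB sAC e /\
     e <> edge_of sAB sAC x /\ e <> edge_of sAB sAC x' /\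
     edges_adjacent e (edge_of sAB sAC x) /\
     edges_adjacent e (edge_of sAB sAC x')) ->
  sBC x <> sBC x'.
Proof.
move=> solves x x' neq_xx' dist2 eBC; apply: neq_xx'.
case: dist2 => [[_ /= [eAB | eAC]] | [_ [[y ->] [ney_x [ney_x' [[_ adj_x] [_ adj_x']]]]]]].
- exact: (eq_of_eq_sAB solves eBC eAB).
- exact: (eq_of_eq_sAC solves eBC eAC).
case: adj_x adj_x' => /= [eABx | eACx] [eABx' | eACx'].
- by apply: (eq_of_eq_sAB solves eBC); rewrite -eABx eABx'.
- by case: ney_x; rewrite (eq_of_bridging_edge solves eBC eABx eACx').
- by case: ney_x'; rewrite (eq_of_bridging_edge solves (esym eBC) eABx' eACx).
- by apply: (eq_of_eq_sAC solves eBC); rewrite -eACx eACx'.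
Qed.
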